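(* Let $E$ be a finite directed graph with $|E^1|=n\ge1$. Then $\mathrm{h}_{\mathrm{alg}}(L_K(E))\le\log(2n)$.
   Context: For a finite directed graph $E=(E^0,E^1,s,r)$, the Leavitt path algebra $L_K(E)$ over a field $K$ is generated by $E^0\cup E^1\cup\{e^*:e\in E^1\}$ subject to: $vw=\delta_{v,w}v$ for vertices; $s(e)e=e=er(e)$, $r(e)e^*=e^*=e^*s(e)$; $e^*f=\delta_{e,f}r(e)$; $\sum_{s(e)=v}ee^*=v$ for each vertex $v$ with $0<|s^{-1}(v)|<\infty$. Its standard filtration $W_m$ is the span of $\lambda\mu^*$ with $\lambda,\mu$ paths and $l(\lambda)+l(\mu)\le m$. $\mathrm{h}_{\mathrm{alg}}(L_K(E))=0$ if $L_K(E)$ is finite-dimensional and otherwise $\limsup_m\frac1m\log\dim(W_m/W_{m-1})$. *)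

From HB Require Import structures.
From mathcomp Require Import all_boot all_order all_algebra.
From mathcomp Require Import all_classical all_reals all_analysis.
Set Implicit Arguments. Unset Strict Implicit. Unset Printing Implicit Defensive.
Import Order.TTheory GRing.Theory Num.Theory.
Local Open Scope ring_scope.

(* A finite directed graph E = (E^0, E^1, s, r): vertices V : finType,
   edges Ed : finType, source s and range r. *)

Section Leavitt.
Variables (K : fieldType) (V Ed : finType) (s r : Ed -> V).

(* Leavitt relations for a family (v |-> pv v, e |-> pe e, e |-> pes e = e^* )
   in a K-algebra B. *)
Definition leavitt_family (B : algType K) (pv : V -> B) (pe pes : Ed -> B) : Prop :=
  [/\ (forall v w, pv v * pv w = if v == w then pv v else 0),
      (forall e, pv (s e) * pe e = pe e /\ pe e * pv (r e) = pe e),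
      (forall e, pv (r e) * pes e = pes e /\ pes e * pv (s e) = pes e),
      (forall e f, pes e * pe f = if e == f then pv (r e) else 0) &
      (forall v, (exists e, s e = v) ->
          \sum_(e | s e == v) pe e * pes e = pv v)].

(* K-algebra homomorphism (not necessarily unital). *)
Definition alg_hom (A B : algType K) (phi : A -> B) : Prop :=
  (forall (a : K) (x y : A), phi (a *: x + y) = a *: phi x + phi y) /\
  (forall x y : A, phi (x * y) = phi x * phi y).

Definition is_leavitt_path_algebra (A : algType K) (pv : V -> A) (pe pes : Ed -> A)
  : Prop :=
  leavitt_family pv pe pes /\
  forall (B : algType K) (qv : V -> B) (qe qes : Ed -> B),
    leavitt_family qv qe qes ->
    exists phi : A -> B,
      [/\ alg_hom phi, (forall v, phi (pv v) = qv v),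
          (forall e, phi (pe e) = qe e), (forall e, phi (pes e) = qes e) &
          (forall psi : A -> B, alg_hom psi -> (forall v, psi (pv v) = qv v) ->
             (forall e, psi (pe e) = qe e) -> (forall e, psi (pes e) = qes e) ->
             psi =1 phi)].

(* Paths: a pair (v, p) with p = e_1 ... e_k, s(e_1) = v, r(e_i) = s(e_{i+1});
   when k = 0 this is the trivial path at the vertex v. Length = size p. *)
Definition is_path (v : V) (p : seq Ed) : bool :=
  (if p is e :: _ then s e == v else true) && sorted (fun e f => r e == s f) p.

Definition paths_len (k : nat) : seq (V * seq Ed) :=
  [seq vp <- [seq (v, tval t) | v <- enum V, t <- enum {:k.-tuple Ed}] | is_path vp.1 vp.2].

Definition paths_upto (m : nat) : seq (V * seq Ed) :=
  flatten [seq paths_len k | k <- iota 0 m.+1].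

Variables (A : algType K) (pv : V -> A) (pe pes : Ed -> A).

Definition path_elt (vp : V * seq Ed) : A := pv vp.1 * \prod_(e <- vp.2) pe e.
Definition ghost_elt (vp : V * seq Ed) : A :=
  (\prod_(e <- rev vp.2) pes e) * pv vp.1.

(* spanning family of W_m : all lambda mu^* with l(lambda) + l(mu) <= m *)
Definition Wgen (m : nat) : seq A :=
  [seq path_elt lm.1 * ghost_elt lm.2 |
     lm <- [seq (l, u) | l <- paths_upto m, u <- paths_upto m]
   & (size lm.1.2 + size lm.2.2 <= m)%N].

End Leavitt.

Section LinAlg.
Variables (K : fieldType) (A : lmodType K).

Definition lin_indep (vs : seq A) : Prop :=
  forall c : seq K, size c = size vs ->
    \sum_(i < size vs) c`_i *: vs`_i = 0 -> forall i, (i < size vs)%N -> c`_i = 0.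

Definition dim_span (vs : seq A) : nat :=
  \max_(t : (size vs).-tuple bool | `[< lin_indep (mask t vs) >]) size (mask t vs).

Definition finite_dim : Prop :=
  exists vs : seq A, forall x : A,
    exists c : seq K, x = \sum_(i < size vs) c`_i *: vs`_i.
End LinAlg.

Section Entropy.
Variables (K : fieldType) (V Ed : finType) (s r : Ed -> V).
Variables (A : algType K) (pv : V -> A) (pe pes : Ed -> A).

Definition W_dim (m : nat) : nat := dim_span (Wgen s r pv pe pes m).

(* dim (W_m / W_{m-1}) = dim W_m - dim W_{m-1}  (W_{-1} = 0, W_{m-1} <= W_m) *)
Definition W_quot_dim (m : nat) : nat :=
  if m is m'.+1 then (W_dim m'.+1 - W_dim m')%N else W_dim 0.

(* (1/m) log dim(W_m/W_{m-1}) in the extended reals, with log 0 = -oo *)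
Definition growth_term (R : realType) (m : nat) : \bar R :=
  if W_quot_dim m == 0%N then -oo%E
  else ((ln (W_quot_dim m)%:R) / m%:R)%:E.

Definition h_alg (R : realType) : \bar R :=
  if `[< finite_dim A >] then 0%E else limn_esup (growth_term R).
End Entropy.

From Pilot Require Import Defs.
From HB Require Import structures.
From mathcomp Require Import all_boot all_order all_algebra.
From mathcomp Require Import all_classical all_reals all_analysis.
From mathcomp Require Import zify.
Import Order.TTheory GRing.Theory Num.Theory.
Local Open Scope classical_set_scope.

(* W_m is spanned by the monomials lambda mu^* with l(lambda) + l(mu) <= m.
   There are at most |V| n^k paths of length k, hence at most
   (m+1)^2 |V|^2 n^m such monomials, and so dim (W_m / W_(m-1)) <= dim W_m
   <= (m+1)^2 |V|^2 n^m <= (2n)^m once 2^m beats the polynomial factor.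
   Thus (1/m) log dim (W_m / W_(m-1)) <= log (2n) for all large m. *)

Section PathCounting.
Variables (V Ed : finType) (s r : Ed -> V).

Lemma size_paths_len k : (size (paths_len s r k) <= #|V| * #|Ed| ^ k)%N.
Proof.
rewrite /paths_len size_filter (leq_trans (count_size _ _)) //.
by rewrite size_allpairs -!cardE card_tuple.
Qed.

Lemma size_mem_paths_len k vp : vp \in paths_len s r k -> size vp.2 = k.
Proof.
rewrite mem_filter => /andP[_ /allpairsP [[v t] [_ _ ->]]] /=.
by rewrite size_tuple.
Qed.

Lemma sum_paths_upto_le m (F : V * seq Ed -> nat) (G : nat -> nat) :
  (forall k vp, (k <= m)%N -> vp \in paths_len s r k -> (F vp <= G k)%N) ->
  (\sum_(vp <- paths_upto s r m) F vp <= \sum_(k < m.+1) #|V| * #|Ed| ^ k * G k)%N.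
Proof.
move=> FG; rewrite /paths_upto big_flatten big_map.
rewrite -(subn0 m.+1) -/(index_iota 0 m.+1) big_mkord.
apply: leq_sum => k _.
apply: (@leq_trans (\sum_(vp <- paths_len s r k) G k)).
  rewrite big_seq_cond [X in (_ <= X)%N]big_seq_cond.
  by apply: leq_sum => vp /andP[vp_k _]; apply: FG vp_k; rewrite -ltnS.
by rewrite big_const_seq count_predT iter_addn_0 mulnC leq_mul2r size_paths_len orbT.
Qed.

Lemma size_Wgen (K : fieldType) (A : algType K) (pv : V -> A) (pe pes : Ed -> A) m :
  (0 < #|Ed|)%N ->
  (size (Wgen s r pv pe pes m) <= m.+1 ^ 2 * #|V| ^ 2 * #|Ed| ^ m)%N.
Proof.
move=> Ed_gt0.
rewrite /Wgen size_map size_filter -sum1_count big_mkcond big_allpairs /=.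
pose G k1 := (\sum_(k2 < m.+1) #|V| * #|Ed| ^ k2 * (k1 + k2 <= m))%N.
apply: (@leq_trans (\sum_(k1 < m.+1) #|V| * #|Ed| ^ k1 * G k1)).
  apply: (@sum_paths_upto_le m _ G) => k1 vp k1m /size_mem_paths_len ->.
  apply: (@sum_paths_upto_le m _ (fun k2 => nat_of_bool (k1 + k2 <= m)%N)).
  move=> k2 vp' k2m /size_mem_paths_len ->.
  by case: ifP.
have -> : (m.+1 ^ 2 * #|V| ^ 2 * #|Ed| ^ m =
           \sum_(k1 < m.+1) \sum_(k2 < m.+1) #|V| ^ 2 * #|Ed| ^ m)%N.
  by rewrite !sum_nat_const !card_ord; lia.
apply: leq_sum => k1 _; rewrite big_distrr /=.
apply: leq_sum => k2 _.
have [k12m|] := leqP (k1 + k2) m; last by rewrite !muln0.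
by rewrite muln1 mulnACA mulnn -expnD leq_mul // leq_pexp2l.
Qed.

End PathCounting.

Lemma succ_cube_le_exp2 m : (12 <= m)%N -> (m.+1 ^ 3 <= 2 ^ m)%N.
Proof.
elim: m => // m IH; rewrite leq_eqVlt => /orP[/eqP <- // | m_ge12].
have step : (m.+2 ^ 3 <= 2 * m.+1 ^ 3)%N by rewrite !expnS expn0; nia.
by rewrite (leq_trans step) // (expnS 2 m) leq_mul2l IH.
Qed.

Lemma poly_le_exp2 C : \forall m \near \oo, (m.+1 ^ 2 * C <= 2 ^ m)%N.
Proof.
exists (maxn 12 C) => // m /=; rewrite geq_max => /andP[m_ge12 Cm].
rewrite (leq_trans _ (succ_cube_le_exp2 _ m_ge12)) // [in X in (_ <= X)%N]expnS.
by rewrite mulnC leq_mul2r (leq_trans Cm) ?orbT.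
Qed.

Lemma dim_span_le_size (K : fieldType) (A : lmodType K) (vs : seq A) :
  (Defs.dim_span vs <= size vs)%N.
Proof.
apply/bigmax_leqP => t _.
by rewrite size_mask ?size_tuple // (leq_trans (count_size _ _)) ?size_tuple.
Qed.

Section GrowthBound.
Variables (K : fieldType) (V Ed : finType) (s r : Ed -> V).
Variables (A : algType K) (pv : V -> A) (pe pes : Ed -> A).

Lemma W_quot_dim_le_size_Wgen m :
  (W_quot_dim s r pv pe pes m <= size (Wgen s r pv pe pes m))%N.
Proof.
rewrite (@leq_trans (W_dim s r pv pe pes m)) ?dim_span_le_size //.
by case: m => //= m; apply: leq_subr.
Qed.

Lemma W_quot_dim_le_exp : (0 < #|Ed|)%N ->
  \forall m \near \oo, (W_quot_dim s r pv pe pes m <= (2 * #|Ed|) ^ m)%N.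
Proof.
move=> Ed_gt0; near=> m.
apply: leq_trans (W_quot_dim_le_size_Wgen m) _.
apply: leq_trans (@size_Wgen _ _ s r _ _ pv pe pes m Ed_gt0) _.
rewrite expnMn leq_mul2r; apply/orP; right.
by near: m; apply: poly_le_exp2.
Unshelve. all: by end_near.
Qed.

Lemma growth_term_le (R : realType) (b m : nat) : (0 < m)%N ->
  (W_quot_dim s r pv pe pes m <= b ^ m)%N ->
  (growth_term s r pv pe pes R m <= (ln (b%:R : R))%:E)%E.
Proof.
rewrite /growth_term; set q := W_quot_dim _ _ _ _ _ m => m_gt0 q_le.
have [_|q_neq0] := eqVneq q 0%N; first exact: leNye.
have q_gt0 : (0 < q)%N by rewrite lt0n.
have b_gt0 : (0 < b)%N by rewrite lt0n; apply: contraTneq q_le => ->; rewrite exp0n -?ltnNge.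
rewrite lee_fin ler_pdivrMr ?ltr0n // mulr_natr -lnXn ?ltr0n //.
by rewrite ler_ln ?posrE ?exprn_gt0 ?ltr0n // -natrX ler_nat.
Qed.

End GrowthBound.

Lemma limn_esup_le_near (R : realType) (u : (\bar R)^nat) (x : \bar R) :
  (\forall n \near \oo, (u n <= x)%E) -> (limn_esup u <= x)%E.
Proof.
move=> ev_ux; rewrite /limn_esup limf_esupE.
apply: (@le_trans _ _ (ereal_sup (u @` [set n | (u n <= x)%E]))).
  by apply: ereal_inf_lbound; exists [set n | (u n <= x)%E].
by apply: ge_ereal_sup => _ [n ux <-].
Qed.

Local Open Scope ring_scope.

Theorem corollary4p6 (K : fieldType) (V Ed : finType) (s r : Ed -> V)
  (A : algType K) (pv : V -> A) (pe pes : Ed -> A)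
  (HA : is_leavitt_path_algebra s r pv pe pes)
  (R : realType) (hn : (1 <= #|Ed|)%N) :
  (h_alg s r pv pe pes R <= (ln (2 * #|Ed|%:R : R))%:E)%E.
Proof.
have -> : (2 * #|Ed|%:R : R) = (2 * #|Ed|)%N%:R by rewrite natrM.
rewrite /h_alg; case: asboolP => _.
  by rewrite lee_fin ln_ge0 // ler1n muln_gt0.
apply: limn_esup_le_near; near=> m.
apply: growth_term_le; first by near: m; exists 1%N.
by near: m; apply: W_quot_dim_le_exp.
Unshelve. all: by end_near.
Qed.
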